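(* Let $X$, $Y$ be disjoint sets of cardinality at least two, $M\le\mathrm{Sym}(X)$ and $N\le\mathrm{Sym}(Y)$ nontrivial permutation groups, $T$ the $(|X|,|Y|)$-biregular tree and $c$ a legal colouring of $X$ and $Y$. For each vertex $v$ write $c(\overline{A}(v))$ for the unique colour of the arcs terminating at $v$. Then two vertices $v,v'\in V_X$ lie in the same orbit of $U_c(M,N)$ if and only if $c(\overline{A}(v))$ and $c(\overline{A}(v'))$ lie in the same orbit of $N$; and two vertices $v,v'\in V_Y$ lie in the same orbit of $U_c(M,N)$ if and only if $c(\overline{A}(v))$ and $c(\overline{A}(v'))$ lie in the same orbit of $M$.
   Context: $T$ has natural bipartition $VT=V_X\sqcup V_Y$ (vertices in $V_X$ have valency $|X|$, in $V_Y$ valency $|Y|$). $A(v)$, $\overline{A}(v)$ are the sets of arcs (ordered pairs of adjacent vertices) with origin, resp. terminus, $v$. A legal colouring is a map $c:AT\to X\cup Y$ restricting to a bijection $A(v)\to X$ for $v\in V_X$, to a bijection $A(v)\to Y$ for $v\in V_Y$, and constant on each $\overline{A}(v)$. $U_c(M,N)$ is the group of $g\in\mathrm{Aut}(T)$ with $gV_X=V_X$ and $c|_{A(gv)}\circ g|_{A(v)}\circ(c|_{A(v)})^{-1}$ in $M$ for $v\in V_X$ and in $N$ for $v\in V_Y$. *)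

(* X, Y are arbitrary (possibly infinite) types; the tree is any
   graph (V, adj) satisfying the defining properties of the (|X|,|Y|)-biregular
   tree (it is unique up to isomorphism). *)
From Stdlib Require Import List Relations.

Set Implicit Arguments.

Definition bijective {A B : Type} (f : A -> B) : Prop :=
  (forall a b, f a = f b -> a = b) /\ (forall y, exists x, f x = y).

Record perm_group {X : Type} (M : (X -> X) -> Prop) : Prop := {
  pg_bij  : forall m, M m -> bijective m;
  pg_id   : M (fun x => x);
  pg_comp : forall m n, M m -> M n -> M (fun x => m (n x));
  pg_inv  : forall m m', M m -> (forall x, m (m' x) = x /\ m' (m x) = x) -> M m'
}.

Definition nontrivial {X : Type} (M : (X -> X) -> Prop) : Prop :=
  exists m, M m /\ exists x, m x <> x.

Definition at_least_two (X : Type) : Prop := exists x1 x2 : X, x1 <> x2.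

Section Graph.
Variable V : Type.
Variable adj : V -> V -> Prop.

(* non-backtracking walk: [prev; x] followed by l *)
Fixpoint nbwalk (prev x : V) (l : list V) : Prop :=
  match l with
  | nil => True
  | y :: l' => adj x y /\ y <> prev /\ nbwalk x y l'
  end.

Definition is_tree : Prop :=
  (forall u v, adj u v -> adj v u) /\
  (forall v, ~ adj v v) /\
  (forall u v, clos_refl_trans V adj u v) /\
  (forall x y l, adj x y -> nbwalk x y l -> last l y <> x).

(* T with natural bipartition V_X = {isX = true}, V_Y = {isX = false},
   vertices of V_X of valency |X|, of V_Y of valency |Y|. *)
Definition biregular_tree (isX : V -> bool) (X Y : Type) : Prop :=
  is_tree /\
  (forall u v, adj u v -> isX u <> isX v) /\
  (forall v, isX v = true -> exists f : {w | adj v w} -> X, bijective f) /\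
  (forall v, isX v = false -> exists f : {w | adj v w} -> Y, bijective f).

(* legal colouring c : AT -> X ⊔ Y (values on non-arcs are irrelevant) *)
Definition legal_colouring (isX : V -> bool) (X Y : Type) (c : V -> V -> X + Y) : Prop :=
  (forall v, isX v = true ->
     (forall w, adj v w -> exists x, c v w = inl x) /\
     (forall w w', adj v w -> adj v w' -> c v w = c v w' -> w = w') /\
     (forall x, exists w, adj v w /\ c v w = inl x)) /\
  (forall v, isX v = false ->
     (forall w, adj v w -> exists y, c v w = inr y) /\
     (forall w w', adj v w -> adj v w' -> c v w = c v w' -> w = w') /\
     (forall y, exists w, adj v w /\ c v w = inr y)) /\
  (forall v u u', adj u v -> adj u' v -> c u v = c u' v).

Definition is_aut (g : V -> V) : Prop :=
  bijective g /\ (forall u v, adj u v <-> adj (g u) (g v)).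

Definition in_U (isX : V -> bool) (X Y : Type) (c : V -> V -> X + Y)
  (M : (X -> X) -> Prop) (N : (Y -> Y) -> Prop) (g : V -> V) : Prop :=
  is_aut g /\
  (forall v, isX (g v) = isX v) /\
  (forall v, isX v = true ->
     exists m, M m /\
       forall w x, adj v w -> c v w = inl x -> c (g v) (g w) = inl (m x)) /\
  (forall v, isX v = false ->
     exists n, N n /\
       forall w y, adj v w -> c v w = inr y -> c (g v) (g w) = inr (n y)).

Definition in_colour (X Y : Type) (c : V -> V -> X + Y) (v : V) (k : X + Y) : Prop :=
  forall u, adj u v -> c u v = k.

End Graph.

From Stdlib Require Import List Relations ClassicalEpsilon Classical Lia.
Import ListNotations.
Set Implicit Arguments.
Unset Strict Implicit.

(* An element of U_c(M,N) acts on the colours around each vertex by an element of M or N;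
   reading this off at an arc terminating at v gives the forward implications.
   Conversely, if m and n are permutations of X and Y, the colours of the arcs terminating
   at v and v' correspond under twist m n, and v, v' lie on the same side, then there is
   an automorphism g with g v = v' and c (g u) (g w) = twist m n (c u w) on every arc.
   Its value at w is obtained by following from v', backwards, the twisted colours of the
   unique reduced walk from w to v; uniqueness of reduced walks in a tree makes g
   injective, and the legal colouring makes it locally surjective, hence surjective.
   Such a g lies in U_c(M,N) when m is in M and n is in N. *)

Lemma last_cons {A : Type} (a : A) l d : last (a :: l) d = last l a.
Proof.
  revert a d; induction l as [|b l IH]; intros a d; [reflexivity|].
  change (last (b :: l) d = last (b :: l) a). rewrite !IH. reflexivity.
Qed.

Lemma last_app_cons {A : Type} (l m : list A) a d : last (l ++ a :: m) d = last (a :: m) d.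
Proof.
  induction l as [|b l IH]; [reflexivity|].
  simpl; destruct (l ++ a :: m) eqn:E; [destruct l; discriminate | exact IH].
Qed.

Lemma last_map {A B : Type} (f : A -> B) l d : last (map f l) (f d) = f (last l d).
Proof.
  induction l as [|a l IH]; [reflexivity|].
  destruct l as [|b l]; [reflexivity | exact IH].
Qed.

Lemma hd_rev {A : Type} (l : list A) d : hd d (rev l) = last l d.
Proof.
  induction l as [|a l IH] using rev_ind; [reflexivity|].
  rewrite rev_app_distr, last_last. reflexivity.
Qed.

Section ReducedWalks.
Variables (V : Type) (adj : V -> V -> Prop).
Hypothesis adj_sym : forall u w, adj u w -> adj w u.
Hypothesis no_cycle : forall x y l, adj x y -> nbwalk adj x y l -> last l y <> x.

Inductive reduced : list V -> Prop :=
| reduced_one a : reduced [a]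
| reduced_two a b : adj a b -> reduced [a; b]
| reduced_step a b c l :
    adj a b -> a <> c -> reduced (b :: c :: l) -> reduced (a :: b :: c :: l).

Lemma reduced_inv a b l :
  reduced (a :: b :: l) -> adj a b /\ reduced (b :: l) /\ hd_error l <> Some a.
Proof.
  intro H; inversion H; subst.
  - repeat split; [assumption | constructor | discriminate].
  - repeat split; try assumption. simpl; congruence.
Qed.

Lemma reduced_cons a b l :
  adj a b -> reduced (b :: l) -> hd_error l <> Some a -> reduced (a :: b :: l).
Proof.
  intros A H NB; destruct l as [|z l].
  - constructor; assumption.
  - constructor; [assumption | simpl in NB; congruence | assumption].
Qed.

Lemma reduced_extend a l z :
  reduced (a :: l) -> adj a z -> (exists l', l = z :: l') \/ reduced (z :: a :: l).
Proof.
  intros H A; destruct l as [|b l].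
  - right; constructor; apply adj_sym, A.
  - destruct (classic (b = z)) as [<-|D].
    + left; exists l; reflexivity.
    + right; constructor; [apply adj_sym, A | congruence | assumption].
Qed.

Lemma reduced_glue l a b c l' :
  reduced (l ++ [a; b]) -> reduced (b :: c :: l') -> a <> c ->
  reduced (l ++ a :: b :: c :: l').
Proof.
  intros H H' D; induction l as [|x l IH]; simpl in *.
  - constructor; [apply (reduced_inv H) | assumption | assumption].
  - destruct l as [|y l]; simpl in *; destruct (reduced_inv H) as (A & Hl & NB).
    all: apply reduced_cons; auto; destruct l; exact NB.
Qed.

Lemma reduced_rev l : reduced l -> reduced (rev l).
Proof.
  induction 1 as [a | a b A | a b c l A D H IH]; simpl.
  - constructor.
  - constructor; apply adj_sym, A.
  - simpl in IH; rewrite <- !app_assoc in *; simpl in *.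
    apply reduced_glue; [assumption | constructor; apply adj_sym, A | congruence].
Qed.

Lemma reduced_nbwalk a b l : reduced (a :: b :: l) -> nbwalk adj a b l.
Proof.
  revert a b; induction l as [|z l IH]; intros a b H; simpl; [trivial|].
  destruct (reduced_inv H) as (_ & Hl & NB).
  destruct (reduced_inv Hl) as (A & _ & _).
  repeat split; [assumption | simpl in NB; congruence | apply IH, Hl].
Qed.

Lemma reduced_not_closed P d : reduced P -> 2 <= length P -> hd d P <> last P d.
Proof.
  intros H L; destruct P as [|a [|b l]]; simpl in L; try lia.
  change (a <> last (b :: l) d); rewrite last_cons.
  apply not_eq_sym, (no_cycle (proj1 (reduced_inv H)) (reduced_nbwalk H)).
Qed.

(* Two distinct reduced walks with the same ends would glue to a reduced closed walk. *)
Lemma reduced_unique P Q d :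
  reduced P -> reduced Q -> hd d P = hd d Q -> last P d = last Q d -> P = Q.
Proof.
  revert Q; induction P as [|w P IH]; intros Q HP HQ Hd Hl; [inversion HP|].
  destruct Q as [|w' Q]; [inversion HQ|]; simpl in Hd; subst w'.
  destruct P as [|p P], Q as [|q Q].
  - reflexivity.
  - exfalso; apply (reduced_not_closed (d := d) HQ); [simpl; lia | exact Hl].
  - exfalso; apply (reduced_not_closed (d := d) HP); [simpl; lia | symmetry; exact Hl].
  - destruct (classic (p = q)) as [<-|D].
    + f_equal; apply IH; [apply (reduced_inv HP) | apply (reduced_inv HQ) | reflexivity | exact Hl].
    + exfalso.
      assert (HR := reduced_rev HQ); simpl in HR; rewrite <- app_assoc in HR.
      apply (reduced_not_closed (d := d) (reduced_glue HR HP (not_eq_sym D))).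
      * rewrite length_app; simpl; lia.
      * rewrite last_app_cons.
        transitivity (hd d (rev (q :: Q))); [simpl; destruct (rev Q); reflexivity|].
        rewrite hd_rev; symmetry; exact Hl.
Qed.

Section Image.
Variable f : V -> V.
Hypothesis f_adj : forall a b, adj a b -> adj (f a) (f b).
Hypothesis f_locally_inj : forall u z z', adj z u -> adj z' u -> f z = f z' -> z = z'.

Lemma reduced_map P : reduced P -> reduced (map f P).
Proof.
  induction 1 as [a | a b A | a b c l A D H IH]; simpl in *.
  - constructor.
  - constructor; apply f_adj, A.
  - constructor; [apply f_adj, A | | exact IH].
    intro E; apply D, (@f_locally_inj b); [exact A | apply adj_sym, (reduced_inv H) | exact E].
Qed.

Lemma reduced_map_inj P Q d :
  reduced P -> reduced Q -> last P d = last Q d -> map f P = map f Q -> P = Q.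
Proof.
  revert Q; induction P as [|a P IH]; intros Q HP HQ Hl E; [inversion HP|].
  destruct Q as [|b Q]; [inversion HQ|]; injection E as Eab E.
  destruct P as [|p P], Q as [|q Q]; try discriminate.
  - simpl in Hl; congruence.
  - assert (EPQ : p :: P = q :: Q).
    { apply IH; [apply (reduced_inv HP) | apply (reduced_inv HQ) | exact Hl | exact E]. }
    rewrite EPQ in HP |- *; f_equal.
    apply (@f_locally_inj q); [apply (reduced_inv HP) | apply (reduced_inv HQ) | exact Eab].
Qed.

End Image.

End ReducedWalks.

Definition colour_side {X Y : Type} (k : X + Y) : bool :=
  match k with inl _ => true | inr _ => false end.

Definition twist {X Y : Type} (m : X -> X) (n : Y -> Y) (k : X + Y) : X + Y :=
  match k with inl x => inl (m x) | inr y => inr (n y) end.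

Section Twist.
Variables (X Y : Type) (m : X -> X) (n : Y -> Y).

Lemma colour_side_twist k : colour_side (twist m n k) = colour_side k.
Proof. destruct k; reflexivity. Qed.

Hypothesis m_bij : bijective m.
Hypothesis n_bij : bijective n.

Lemma twist_inj k k' : twist m n k = twist m n k' -> k = k'.
Proof.
  destruct k, k'; simpl; intro E; try discriminate; injection E as E; f_equal;
    [apply (proj1 m_bij) | apply (proj1 n_bij)]; exact E.
Qed.

Lemma twist_surj k' : exists k, twist m n k = k'.
Proof.
  destruct k' as [x'|y'].
  - destruct (proj2 m_bij x') as [x <-]; exists (inl x); reflexivity.
  - destruct (proj2 n_bij y') as [y <-]; exists (inr y); reflexivity.
Qed.

End Twist.

Section LegalColouring.
Variables (X Y V : Type) (adj : V -> V -> Prop) (isX : V -> bool) (c : V -> V -> X + Y).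
Hypothesis colouring : legal_colouring adj isX c.

Lemma out_colour_side u w : adj u w -> colour_side (c u w) = isX u.
Proof.
  destruct colouring as (HX & HY & _); intro A; destruct (isX u) eqn:E.
  - destruct (proj1 (HX u E) w A) as [x ->]; reflexivity.
  - destruct (proj1 (HY u E) w A) as [y ->]; reflexivity.
Qed.

Lemma out_arc_of_colour u k : colour_side k = isX u -> exists w, adj u w /\ c u w = k.
Proof.
  destruct colouring as (HX & HY & _); destruct k as [x|y]; simpl; intro E.
  - apply (HX u (eq_sym E)).
  - apply (HY u (eq_sym E)).
Qed.

Lemma out_colour_inj u w w' : adj u w -> adj u w' -> c u w = c u w' -> w = w'.
Proof.
  destruct colouring as (HX & HY & _); destruct (isX u) eqn:E.
  - apply (HX u E).
  - apply (HY u E).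
Qed.

Lemma in_colour_const u u' w : adj u w -> adj u' w -> c u w = c u' w.
Proof. intros A A'; apply (proj2 (proj2 colouring) w u u' A A'). Qed.

Lemma exists_out_arc (x0 : X) (y0 : Y) u : exists w, adj u w.
Proof.
  destruct (@out_arc_of_colour u (if isX u then inl x0 else inr y0)) as (w & A & _).
  - destruct (isX u); reflexivity.
  - exists w; exact A.
Qed.

End LegalColouring.

Section TwistingAutomorphism.
Variables (X Y V : Type) (adj : V -> V -> Prop) (isX : V -> bool) (c : V -> V -> X + Y).
Variables (m : X -> X) (n : Y -> Y).
Hypothesis tree : biregular_tree adj isX X Y.
Hypothesis colouring : legal_colouring adj isX c.
Hypothesis m_bij : bijective m.
Hypothesis n_bij : bijective n.

Lemma tree_adj_sym u w : adj u w -> adj w u.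
Proof. apply (proj1 (proj1 tree)). Qed.

Lemma tree_no_cycle x y l : adj x y -> nbwalk adj x y l -> last l y <> x.
Proof. apply (proj2 (proj2 (proj2 (proj1 tree)))). Qed.

Lemma tree_connected u w : clos_refl_trans_1n V adj u w.
Proof. apply clos_rt_rt1n, (proj1 (proj2 (proj2 (proj1 tree)))). Qed.

Lemma tree_adj_sides u w : adj u w -> isX w = negb (isX u).
Proof.
  intro A; pose proof (proj1 (proj2 tree) u w A) as D.
  destruct (isX u), (isX w); simpl; congruence.
Qed.

Definition compatible (u u' : V) : Prop :=
  isX u = isX u' /\ forall z z', adj z u -> adj z' u' -> c z' u' = twist m n (c z u).

Definition nbr (a : V) (k : X + Y) : V :=
  epsilon (inhabits a) (fun b => adj a b /\ c a b = k).

Lemma nbr_spec a k : colour_side k = isX a -> adj a (nbr a k) /\ c a (nbr a k) = k.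
Proof.
  intro E; apply (epsilon_spec (inhabits a) (fun b => adj a b /\ c a b = k)).
  apply (out_arc_of_colour colouring), E.
Qed.

Lemma nbr_twist_spec u u' w : isX u = isX u' -> adj u w ->
  adj u' (nbr u' (twist m n (c u w))) /\ c u' (nbr u' (twist m n (c u w))) = twist m n (c u w).
Proof.
  intros E A; apply nbr_spec.
  rewrite colour_side_twist, (out_colour_side colouring A); exact E.
Qed.

Lemma compatible_nbr u u' w : compatible u u' -> adj u w ->
  compatible w (nbr u' (twist m n (c u w))).
Proof.
  intros [E _] A; destruct (nbr_twist_spec E A) as [A' C']; split.
  - rewrite (tree_adj_sides A), (tree_adj_sides A'), E; reflexivity.
  - intros z z' Z Z'.
    rewrite (in_colour_const colouring Z' A'), C', (in_colour_const colouring Z A); reflexivity.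
Qed.

Variables v v' : V.
Hypothesis base : compatible v v'.

(* [transport P], for a walk [P] ending at [v], is the end of the walk from [v'] whose
   colours are the twisted colours of [P], read from its end. *)
Fixpoint transport (P : list V) : V :=
  match P with
  | [] | [_] => v'
  | a :: (b :: _) as P' => nbr (transport P') (twist m n (c b a))
  end.

Lemma compatible_transport P : reduced adj P -> last P v = v -> compatible (hd v P) (transport P).
Proof.
  induction P as [|a [|b P] IH]; intros H L; [inversion H | simpl in L; subst; exact base |].
  destruct (reduced_inv H) as (A & H' & _).
  apply (compatible_nbr (IH H' L)), tree_adj_sym, A.
Qed.

Definition is_geodesic (w : V) (P : list V) : Prop :=
  reduced adj P /\ hd v P = w /\ last P v = v.

Lemma geodesic_exists w : exists P, is_geodesic w P.
Proof.
  assert (step : forall a b, adj a b -> (exists P, is_geodesic a P) -> exists P, is_geodesic b P).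
  { intros a b A ([|a' P] & H & Hd & Hl); [inversion H|]; simpl in Hd; subst a'.
    destruct (reduced_extend tree_adj_sym H A) as [[P' ->] | H'].
    - exists (b :: P'); repeat split; [apply (reduced_inv H) | exact Hl].
    - exists (b :: a :: P); repeat split; [exact H' | exact Hl]. }
  assert (reach : forall a b, clos_refl_trans_1n V adj a b ->
    (exists P, is_geodesic a P) -> exists P, is_geodesic b P).
  { induction 1 as [a | a b d A _ IH]; [trivial|]; intro Ha; apply IH, (step a b A Ha). }
  apply (reach v w (tree_connected v w)); exists [v]; repeat split; constructor.
Qed.

Definition geodesic (w : V) : list V := epsilon (inhabits [v]) (is_geodesic w).

Lemma geodesic_spec w : is_geodesic w (geodesic w).
Proof. apply (epsilon_spec (inhabits [v]) (is_geodesic w)), geodesic_exists. Qed.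

Lemma geodesic_eq w P : is_geodesic w P -> geodesic w = P.
Proof.
  intros (H & Hd & Hl); destruct (geodesic_spec w) as (H' & Hd' & Hl').
  apply (reduced_unique tree_adj_sym tree_no_cycle (d := v) H' H); congruence.
Qed.

Lemma geodesic_cons w : exists s, geodesic w = w :: s.
Proof.
  destruct (geodesic_spec w) as (H & Hd & _).
  destruct (geodesic w) as [|a s]; [inversion H | simpl in Hd; subst; exists s; reflexivity].
Qed.

Lemma geodesic_adj u z : adj u z -> geodesic z = z :: geodesic u \/ geodesic u = u :: geodesic z.
Proof.
  intro A; destruct (geodesic_cons u) as [s E].
  destruct (geodesic_spec u) as (H & _ & Hl); rewrite E in H, Hl |- *.
  destruct (reduced_extend tree_adj_sym H A) as [[s' ->] | H'].
  - right; f_equal; symmetry; apply geodesic_eq; repeat split; [apply (reduced_inv H) | exact Hl].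
  - left; apply geodesic_eq; repeat split; [exact H' | exact Hl].
Qed.

Definition twist_aut (w : V) : V := transport (geodesic w).

Lemma twist_aut_compatible w : compatible w (twist_aut w).
Proof.
  destruct (geodesic_spec w) as (H & Hd & Hl); unfold twist_aut; rewrite <- Hd at 1.
  apply compatible_transport; assumption.
Qed.

Lemma twist_aut_base : twist_aut v = v'.
Proof.
  unfold twist_aut; rewrite (@geodesic_eq v [v]); [reflexivity | repeat split; constructor].
Qed.

Lemma twist_aut_arc u z : adj u z ->
  adj (twist_aut u) (twist_aut z) /\ c (twist_aut u) (twist_aut z) = twist m n (c u z).
Proof.
  intro A; destruct (geodesic_adj A) as [E|E].
  - assert (Ez : twist_aut z = nbr (twist_aut u) (twist m n (c u z))).
    { destruct (geodesic_cons u) as [s Eu]; unfold twist_aut; rewrite E, Eu; reflexivity. }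
    rewrite Ez; apply nbr_twist_spec; [apply twist_aut_compatible | exact A].
  - assert (Eu : twist_aut u = nbr (twist_aut z) (twist m n (c z u))).
    { destruct (geodesic_cons z) as [s Ez]; unfold twist_aut; rewrite E, Ez; reflexivity. }
    destruct (nbr_twist_spec (proj1 (twist_aut_compatible z)) (tree_adj_sym A)) as [A' _].
    rewrite <- Eu in A'; split; [apply tree_adj_sym, A' |].
    apply (proj2 (twist_aut_compatible z)); [exact A | apply tree_adj_sym, A'].
Qed.

Lemma twist_aut_locally_inj u z z' : adj z u -> adj z' u -> twist_aut z = twist_aut z' -> z = z'.
Proof.
  intros A A' E.
  destruct (twist_aut_arc (tree_adj_sym A)) as [_ C].
  destruct (twist_aut_arc (tree_adj_sym A')) as [_ C'].
  apply (out_colour_inj colouring (tree_adj_sym A) (tree_adj_sym A')), (twist_inj m_bij n_bij).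
  rewrite <- C, <- C', E; reflexivity.
Qed.

Lemma twist_aut_inj a b : twist_aut a = twist_aut b -> a = b.
Proof.
  intro E.
  destruct (geodesic_spec a) as (Ha & Hda & Hla); destruct (geodesic_spec b) as (Hb & Hdb & Hlb).
  assert (twist_aut_adj : forall u z, adj u z -> adj (twist_aut u) (twist_aut z))
    by (intros; apply twist_aut_arc; assumption).
  pose proof (reduced_map tree_adj_sym twist_aut_adj twist_aut_locally_inj Ha) as Ra.
  pose proof (reduced_map tree_adj_sym twist_aut_adj twist_aut_locally_inj Hb) as Rb.
  assert (Hmap : map twist_aut (geodesic a) = map twist_aut (geodesic b)).
  { apply (reduced_unique tree_adj_sym tree_no_cycle (d := v') Ra Rb).
    - destruct (geodesic_cons a) as [s ->]; destruct (geodesic_cons b) as [t ->]; exact E.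
    - rewrite <- twist_aut_base, !last_map, Hla, Hlb; reflexivity. }
  assert (geodesic a = geodesic b)
    by (apply (reduced_map_inj twist_aut_locally_inj (d := v)); congruence).
  congruence.
Qed.

Lemma twist_aut_lift_nbr w b : adj (twist_aut w) b -> exists z, adj w z /\ twist_aut z = b.
Proof.
  intro A; destruct (twist_surj m_bij n_bij (c (twist_aut w) b)) as [k Ek].
  destruct (out_arc_of_colour colouring (u := w) (k := k)) as (z & Az & Cz).
  { rewrite <- (colour_side_twist m n), Ek, (out_colour_side colouring A).
    symmetry; apply twist_aut_compatible. }
  exists z; split; [exact Az|].
  destruct (twist_aut_arc Az) as [A' C'].
  apply (out_colour_inj colouring A' A); rewrite C', Cz, Ek; reflexivity.
Qed.

Lemma twist_aut_surj w' : exists w, twist_aut w = w'.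
Proof.
  assert (reach : forall a b, clos_refl_trans_1n V adj a b ->
    (exists w, twist_aut w = a) -> exists w, twist_aut w = b).
  { induction 1 as [a | a b d A _ IH]; [trivial|]; intros [w <-].
    apply IH; destruct (twist_aut_lift_nbr A) as (z & _ & Ez); exists z; exact Ez. }
  apply (reach v' w' (tree_connected v' w')); exists v; apply twist_aut_base.
Qed.

Theorem exists_twisting_aut : exists g, is_aut adj g /\ (forall w, isX (g w) = isX w) /\
  (forall u w, adj u w -> c (g u) (g w) = twist m n (c u w)) /\ g v = v'.
Proof.
  exists twist_aut.
  split; [split; [split; [exact twist_aut_inj | exact twist_aut_surj] |] | split; [| split]].
  - intros u w; split; intro A; [apply (twist_aut_arc A) |].
    destruct (twist_aut_lift_nbr A) as (z & Az & Ez); apply twist_aut_inj in Ez; subst; exact Az.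
  - intro w; symmetry; apply twist_aut_compatible.
  - intros u w A; apply (twist_aut_arc A).
  - exact twist_aut_base.
Qed.

End TwistingAutomorphism.

Section LocalAction.
Variables (X Y V : Type) (adj : V -> V -> Prop) (isX : V -> bool) (c : V -> V -> X + Y).
Variables (M : (X -> X) -> Prop) (N : (Y -> Y) -> Prop).
Hypothesis HM : perm_group M.
Hypothesis HN : perm_group N.
Hypothesis colouring : legal_colouring adj isX c.

Lemma in_U_twists_arcs g u w : in_U adj isX c M N g -> adj u w ->
  exists m n, M m /\ N n /\ c (g u) (g w) = twist m n (c u w).
Proof.
  intros (_ & _ & HX & HY) A; pose proof (out_colour_side colouring A) as S.
  destruct (c u w) as [x|y] eqn:E; simpl in S.
  - destruct (HX u (eq_sym S)) as (m & Mm & Hm).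
    exists m, (fun y => y); repeat split; [exact Mm | apply (pg_id HN) | exact (Hm w x A E)].
  - destruct (HY u (eq_sym S)) as (n & Nn & Hn).
    exists (fun x => x), n; repeat split; [apply (pg_id HM) | exact Nn | exact (Hn w y A E)].
Qed.

Lemma in_U_of_twisting g m n : M m -> N n -> is_aut adj g -> (forall w, isX (g w) = isX w) ->
  (forall u w, adj u w -> c (g u) (g w) = twist m n (c u w)) -> in_U adj isX c M N g.
Proof.
  intros Mm Nn Ha Hs Hc; split; [exact Ha | split; [exact Hs | split]].
  - intros u _; exists m; split; [exact Mm |]; intros w x A E; rewrite (Hc u w A), E; reflexivity.
  - intros u _; exists n; split; [exact Nn |]; intros w y A E; rewrite (Hc u w A), E; reflexivity.
Qed.

Lemma in_colour_twist_of_in_U (x0 : X) (y0 : Y) g v k k' :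
  (forall u w, adj u w -> adj w u) -> in_U adj isX c M N g ->
  in_colour adj c v k -> in_colour adj c (g v) k' -> exists m n, M m /\ N n /\ k' = twist m n k.
Proof.
  intros adj_sym Hg Hk Hk'.
  destruct (exists_out_arc colouring x0 y0 v) as [u A]; apply adj_sym in A.
  destruct (in_U_twists_arcs Hg A) as (m & n & Mm & Nn & E).
  exists m, n; repeat split; [exact Mm | exact Nn |].
  rewrite <- (Hk u A), <- E; symmetry; apply Hk', (proj1 (proj2 (proj1 Hg) u v)), A.
Qed.

Lemma in_U_of_in_colour_twist m n v v' k : biregular_tree adj isX X Y -> M m -> N n ->
  isX v = isX v' -> in_colour adj c v k -> in_colour adj c v' (twist m n k) ->
  exists g, in_U adj isX c M N g /\ g v = v'.
Proof.
  intros HT Mm Nn E Hk Hk'.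
  destruct (exists_twisting_aut HT colouring (pg_bij HM _ Mm) (pg_bij HN _ Nn) (v := v) (v' := v'))
    as (g & Ha & Hs & Hc & Hg).
  { split; [exact E |]; intros z z' Z Z'; rewrite (Hk z Z), (Hk' z' Z'); reflexivity. }
  exists g; split; [exact (in_U_of_twisting Mm Nn Ha Hs Hc) | exact Hg].
Qed.

End LocalAction.

Theorem proposition3p4
  (X Y : Type) (M : (X -> X) -> Prop) (N : (Y -> Y) -> Prop)
  (V : Type) (adj : V -> V -> Prop) (isX : V -> bool) (c : V -> V -> X + Y) :
  at_least_two X -> at_least_two Y ->
  perm_group M -> perm_group N -> nontrivial M -> nontrivial N ->
  biregular_tree adj isX X Y ->
  legal_colouring adj isX c ->
  (forall (v v' : V) (y y' : Y), isX v = true -> isX v' = true ->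
     in_colour adj c v (inr y) -> in_colour adj c v' (inr y') ->
     ((exists g, in_U adj isX c M N g /\ g v = v') <->
      (exists n, N n /\ n y = y'))) /\
  (forall (v v' : V) (x x' : X), isX v = false -> isX v' = false ->
     in_colour adj c v (inl x) -> in_colour adj c v' (inl x') ->
     ((exists g, in_U adj isX c M N g /\ g v = v') <->
      (exists m, M m /\ m x = x'))).
Proof.
  intros [x0 _] [y0 _] HM HN _ _ HT HL.
  assert (adj_sym : forall u w, adj u w -> adj w u) by exact (proj1 (proj1 HT)).
  split; intros v v' k k' Hv Hv' Hk Hk'; split.
  - intros (g & Hg & <-).
    destruct (in_colour_twist_of_in_U HM HN HL x0 y0 adj_sym Hg Hk Hk') as (m & n & _ & Nn & E).
    exists n; split; [exact Nn | injection E; auto].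
  - intros (n & Nn & <-).
    exact (in_U_of_in_colour_twist HM HN HL HT (pg_id HM) Nn (eq_trans Hv (eq_sym Hv')) Hk Hk').
  - intros (g & Hg & <-).
    destruct (in_colour_twist_of_in_U HM HN HL x0 y0 adj_sym Hg Hk Hk') as (m & n & Mm & _ & E).
    exists m; split; [exact Mm | injection E; auto].
  - intros (m & Mm & <-).
    exact (in_U_of_in_colour_twist HM HN HL HT Mm (pg_id HN) (eq_trans Hv (eq_sym Hv')) Hk Hk').
Qed.
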